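(* For every $\delta>0$ there exists $p=\Theta(1/\sqrt n)$ such that the public-key encryption scheme $(\mathsf{Gen},\mathsf{Enc},\mathsf{Dec})$ described in the context, with parameter $p$, is $(1-\delta)$-correct: for every $\mu\in\{0,1\}$, $\Pr[\mathsf{Dec}(\mathsf{sk},\mathsf{ct})=\mu : (\mathsf{pk},\mathsf{sk})\leftarrow\mathsf{Gen}(1^n),\ \mathsf{ct}\leftarrow\mathsf{Enc}(\mathsf{pk},\mu)]\ge 1-\delta.$
   Context: Symplectic inner product on $\mathbb{Z}_2^{2n}$: $(\mathbf a,\mathbf b)\odot(\mathbf a',\mathbf b')=\mathbf a\cdot\mathbf b'+\mathbf a'\cdot\mathbf b\pmod2$; for $\mathbf f\in\mathbb{Z}_2^{2n}$ and a matrix $\mathbf A$ with $2n$ rows, $\mathbf f\odot\mathbf A$ is the row vector whose $j$-th entry is $\mathbf f\odot(\text{$j$-th column of }\mathbf A)$. A ''random full-rank isotropic matrix'' $\mathbf A\in\mathbb{Z}_2^{2n\times n}$ is uniform among matrices of column rank $n$ whose columns are pairwise symplectically orthogonal. $\mathcal{D}_p^{\otimes n}$: random $\mathbf e\in\mathbb{Z}_2^{2n}$ with independent pairs $(e_j,e_{n+j})$, each $(0,0)$ w.p. $1-p$ and each of $(0,1),(1,0),(1,1)$ w.p. $p/3$. The scheme (security parameter $n$): $\mathsf{Gen}(1^n)$ samples a random full-rank isotropic $\mathbf A\in\mathbb{Z}_2^{2n\times n}$, $\mathbf x\sim\mathbb{Z}_2^n$ uniform, $\mathbf e\sim\mathcal{D}_p^{\otimes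 n}$, and outputs $\mathsf{pk}=(\mathbf A,\mathbf b=\mathbf A\mathbf x+\mathbf e)$, $\mathsf{sk}=\mathbf x$. $\mathsf{Enc}(\mathsf{pk},\mu)$ for $\mu\in\{0,1\}$ samples fresh $\mathbf f\sim\mathcal{D}_p^{\otimes n}$ and outputs $\mathsf{ct}=(\mathbf f\odot\mathbf A,\ \mathbf f\odot\mathbf b+\mu)$. $\mathsf{Dec}(\mathsf{sk},(\mathbf u,c))$ outputs $c+\mathbf u\cdot\mathbf x \pmod 2$ (standard dot product). *)

From HB Require Import structures.
From mathcomp Require Import all_boot all_order all_algebra.
Set Implicit Arguments. Unset Strict Implicit. Unset Printing Implicit Defensive.
Import Order.TTheory GRing.Theory Num.Theory.
Local Open Scope ring_scope.

(* Vectors of Z_2^{2n} are column vectors 'cV['F_2]_(n + n); coordinate j (j < n)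
   of the "a" half is index lshift n j, coordinate n+j ("b" half) is rshift n j. *)

Definition symp n (f g : 'cV['F_2]_(n + n)) : 'F_2 :=
  \sum_(j < n) (f (lshift n j) 0 * g (rshift n j) 0
              + g (lshift n j) 0 * f (rshift n j) 0).

Definition sympA n k (f : 'cV['F_2]_(n + n)) (A : 'M['F_2]_(n + n, k)) : 'rV['F_2]_k :=
  \row_j symp f (col j A).

Definition iso_full n (A : 'M['F_2]_(n + n, n)) : bool :=
  (\rank A == n) && [forall i, forall j, symp (col i A) (col j A) == 0].

Definition Dp (R : fieldType) (p : R) n (e : 'cV['F_2]_(n + n)) : R :=
  \prod_(j < n) (if (e (lshift n j) 0 == 0) && (e (rshift n j) 0 == 0)
                 then 1 - p else p / 3).

(* Gen, given its randomness (A, x, e): returns (pk, sk) *)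
Definition Gen n (A : 'M['F_2]_(n + n, n)) (x : 'cV['F_2]_n) (e : 'cV['F_2]_(n + n))
  : ('M['F_2]_(n + n, n) * 'cV['F_2]_(n + n)) * 'cV['F_2]_n :=
  ((A, A *m x + e), x).

(* Enc, given its randomness f *)
Definition Enc n (pk : 'M['F_2]_(n + n, n) * 'cV['F_2]_(n + n)) (mu : 'F_2)
  (f : 'cV['F_2]_(n + n)) : 'rV['F_2]_n * 'F_2 :=
  (sympA f pk.1, symp f pk.2 + mu).

Definition Dec n (sk : 'cV['F_2]_n) (ct : 'rV['F_2]_n * 'F_2) : 'F_2 :=
  ct.2 + (ct.1 *m sk) 0 0.

(* Pr[Dec(sk, Enc(pk, mu)) = mu], A uniform among full-rank isotropic matrices,
   x uniform, e, f ~ D_p^{(x) n} independent *)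
Definition correct_prob (R : fieldType) (p : R) n (mu : 'F_2) : R :=
  \sum_(A : 'M['F_2]_(n + n, n) | iso_full A)
  \sum_(x : 'cV['F_2]_n) \sum_(e : 'cV['F_2]_(n + n)) \sum_(f : 'cV['F_2]_(n + n))
    ((#|[set B : 'M['F_2]_(n + n, n) | iso_full B]|%:R)^-1 * ((2 ^ n)%N%:R)^-1
     * Dp p e * Dp p f
     * (let k := Gen A x e in (Dec k.2 (Enc k.1 mu f) == mu)%:R)).

From HB Require Import structures.
From mathcomp Require Import all_boot all_order all_algebra.
From mathcomp Require Import ring lra.
Import Order.TTheory GRing.Theory Num.Theory.
Local Open Scope ring_scope.

(* Since [Dec] adds [u . x = f (.) (A x)] to [c = f (.) (A x + e) + mu], the
   decryption error is exactly the noise term [f (.) e], whatever [A] and [x].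
   The term vanishes as soon as, at every coordinate pair [j], one of [e] and [f]
   is zero there; by independence of the pairs this happens with probability
   [(1 - p^2)^n >= 1 - n p^2], which is at least [1 - delta] for
   [p = sqrt (min delta 1) / sqrt n]. *)

Lemma sympDr n (f g h : 'cV['F_2]_(n + n)) : symp f (g + h) = symp f g + symp f h.
Proof. by rewrite /symp -big_split /=; apply: eq_bigr => j _; rewrite !mxE; ring. Qed.

Lemma symp_mulmx n k (f : 'cV['F_2]_(n + n)) (A : 'M['F_2]_(n + n, k)) (x : 'cV_k) :
  symp f (A *m x) = (sympA f A *m x) 0 0.
Proof.
rewrite /symp /sympA mxE.
under [RHS]eq_bigr => i _ do rewrite mxE big_distrl.
rewrite exchange_big /=; apply: eq_bigr => j _.
rewrite !mxE mulr_sumr mulr_suml -big_split /=; apply: eq_bigr => i _.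
by rewrite !mxE; ring.
Qed.

Lemma Dec_Enc_Gen n (A : 'M['F_2]_(n + n, n)) x e f mu :
  Dec (Gen A x e).2 (Enc (Gen A x e).1 mu f) = symp f e + mu.
Proof.
rewrite /Dec /Enc /= sympDr -symp_mulmx.
by rewrite addrC !addrA (addrr_pchar2 (pchar_Fp _)) ?add0r.
Qed.

Lemma iso_full_exists n : exists A : 'M['F_2]_(n + n, n), iso_full A.
Proof.
exists (col_mx 1%:M 0); rewrite /iso_full rank_col_mx0 mxrank1 eqxx /=.
apply/forallP => i; apply/forallP => j; apply/eqP.
rewrite /symp big1 // => k _.
have lower0 l : col l (col_mx (1%:M : 'M['F_2]_n) 0) (rshift n k) 0 = 0.
  by rewrite mxE col_mxEd mxE.
by rewrite !lower0 !mulr0 addr0.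
Qed.

Lemma correct_probE (R : numFieldType) (p : R) n mu :
  correct_prob p n mu
  = \sum_(e : 'cV['F_2]_(n + n)) \sum_(f : 'cV['F_2]_(n + n))
      Dp p e * Dp p f * (symp f e == 0)%:R.
Proof.
set T := RHS; set S := #|[set B : 'M['F_2]_(n + n, n) | iso_full B]|.
have S_gt0 : (0 < S)%N.
  by have [A0 isoA0] := iso_full_exists n; apply/card_gt0P; exists A0; rewrite inE.
transitivity (\sum_(A : 'M['F_2]_(n + n, n) | iso_full A) \sum_(x : 'cV['F_2]_n)
                (S%:R^-1 * (2 ^ n)%:R^-1 * T)).
  apply: eq_bigr => A _; apply: eq_bigr => x _.
  rewrite /T !mulr_sumr; apply: eq_bigr => e _; rewrite mulr_sumr.
  apply: eq_bigr => f _; rewrite /= Dec_Enc_Gen.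
  by rewrite -[X in _ + mu == X]add0r (inj_eq (addIr mu)) !mulrA.
under eq_bigr => A _ do rewrite sumr_const card_mx card_Fp // muln1.
rewrite sumr_const (_ : #|_| = S); last by apply: eq_card => A; rewrite inE.
have S_neq0 : S%:R != 0 :> R by rewrite pnatr_eq0 -lt0n.
have pow2_neq0 : (2 ^ n)%:R != 0 :> R by rewrite pnatr_eq0 expn_eq0.
rewrite -mulrnA -(mulr_natr (_ * T)) natrM.
by clearbody T; field; rewrite S_neq0 pow2_neq0.
Qed.

Definition coord_pair {K : Type} {n : nat} (e : 'cV[K]_(n + n)) (j : 'I_n) : K * K :=
  (e (lshift n j) 0, e (rshift n j) 0).

Lemma coord_pairs_bij (K : Type) n :
  bijective (fun e : 'cV[K]_(n + n) => [ffun j => coord_pair e j]).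
Proof.
exists (fun phi : {ffun 'I_n -> K * K} =>
  col_mx (\col_j (phi j).1) (\col_j (phi j).2)).
- move=> e; rewrite -[RHS]vsubmxK; congr col_mx; apply/matrixP => i k;
    by rewrite !mxE ffunE ord1.
- move=> phi; apply/ffunP => j; rewrite ffunE /coord_pair col_mxEu col_mxEd !mxE.
  by case: (phi j).
Qed.

Lemma sum_coord_pairs (R : nmodType) (K : finType) n (F : {ffun 'I_n -> K * K} -> R) :
  \sum_phi F phi = \sum_(e : 'cV[K]_(n + n)) F [ffun j => coord_pair e j].
Proof. exact: reindex (onW_bij _ (coord_pairs_bij K n)). Qed.

Lemma sum_prod_coord_pairs (R : comPzSemiRingType) (K : finType) n
    (G : K * K -> K * K -> R) :
  \sum_(e : 'cV[K]_(n + n)) \sum_(f : 'cV[K]_(n + n))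
     \prod_(j < n) G (coord_pair e j) (coord_pair f j)
  = (\sum_a \sum_b G a b) ^+ n.
Proof.
rewrite -[n in RHS]card_ord -prodr_const bigA_distr_bigA sum_coord_pairs.
apply: eq_bigr => e _; rewrite bigA_distr_bigA sum_coord_pairs.
by apply: eq_bigr => f _; apply: eq_bigr => j _; rewrite !ffunE.
Qed.

Lemma sum_F2 (R : nmodType) (F : 'F_2 -> R) : \sum_(x : 'F_2) F x = F 0 + F 1.
Proof.
rewrite (@big_ord_recr _ _ _ 1 F) big_ord_recr big_ord0 /= add0r.
by congr (F _ + F _); apply/val_inj.
Qed.

Lemma sum_pair (R : nmodType) (T1 T2 : finType) (F : T1 * T2 -> R) :
  \sum_q F q = \sum_a \sum_b F (a, b).
Proof. by rewrite pair_big; apply: eq_bigr => -[]. Qed.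

Definition pair_weight {R : numFieldType} (p : R) (a : 'F_2 * 'F_2) : R :=
  if a == (0, 0) then 1 - p else p / 3.

Lemma Dp_prod_pair_weight (R : numFieldType) (p : R) n (e : 'cV['F_2]_(n + n)) :
  Dp p e = \prod_(j < n) pair_weight p (coord_pair e j).
Proof. by []. Qed.

Definition pair_disjoint (a b : 'F_2 * 'F_2) : bool := (a == (0, 0)) || (b == (0, 0)).

Lemma sum_pair_weight_disjoint (R : numFieldType) (p : R) :
  \sum_a \sum_b pair_weight p a * pair_weight p b * (pair_disjoint a b)%:R = 1 - p ^+ 2.
Proof.
under eq_bigr => a _ do rewrite sum_pair.
by rewrite sum_pair !sum_F2 /pair_weight /pair_disjoint /=; field.
Qed.

Lemma sum_Dp_disjoint (R : numFieldType) (p : R) n :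
  \sum_(e : 'cV['F_2]_(n + n)) \sum_(f : 'cV['F_2]_(n + n))
     Dp p e * Dp p f * \prod_(j < n) (pair_disjoint (coord_pair e j) (coord_pair f j))%:R
  = (1 - p ^+ 2) ^+ n.
Proof.
rewrite -sum_pair_weight_disjoint -sum_prod_coord_pairs.
apply: eq_bigr => e _; apply: eq_bigr => f _.
by rewrite !Dp_prod_pair_weight -!big_split.
Qed.

Lemma symp_eq0_disjoint n (e f : 'cV['F_2]_(n + n)) :
  (forall j, pair_disjoint (coord_pair e j) (coord_pair f j)) -> symp f e = 0.
Proof.
move=> disj; rewrite /symp big1 // => j _.
by case/orP: (disj j) => /eqP[-> ->]; rewrite !(mulr0, mul0r, addr0).
Qed.

Lemma prod_disjoint_le_symp (R : numDomainType) n (e f : 'cV['F_2]_(n + n)) :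
  \prod_(j < n) (pair_disjoint (coord_pair e j) (coord_pair f j))%:R
  <= (symp f e == 0)%:R :> R.
Proof.
have [/forallP disj | /forallPn[j not_disj]] :=
  boolP [forall j, pair_disjoint (coord_pair e j) (coord_pair f j)].
  by rewrite symp_eq0_disjoint // eqxx big1 // => j _; rewrite disj.
by rewrite (bigD1 j) //= (negbTE not_disj) mul0r ler0n.
Qed.

Lemma Dp_ge0 (R : numFieldType) (p : R) n (e : 'cV['F_2]_(n + n)) :
  0 <= p <= 1 -> 0 <= Dp p e.
Proof.
case/andP=> p_ge0 p_le1; apply: prodr_ge0 => j _.
by case: ifP; rewrite ?subr_ge0 ?divr_ge0 ?ler0n.
Qed.

Lemma correct_prob_ge (R : numFieldType) (p : R) n mu :
  0 <= p <= 1 -> (1 - p ^+ 2) ^+ n <= correct_prob p n mu.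
Proof.
move=> p01; rewrite correct_probE -sum_Dp_disjoint.
apply: ler_sum => e _; apply: ler_sum => f _.
by rewrite ler_wpM2l ?mulr_ge0 ?Dp_ge0 ?prod_disjoint_le_symp.
Qed.

Lemma bernoulli_ineq (R : realDomainType) (x : R) n :
  x <= 1 -> 1 - n%:R * x <= (1 - x) ^+ n.
Proof.
move=> x_le1; elim: n => [|n IHn]; first by rewrite mul0r subr0 expr0.
have n_ge0 : 0 <= n%:R :> R by rewrite ler0n.
have sqr_ge0 : 0 <= x ^+ 2 := sqr_ge0 x.
rewrite exprS -addn1 natrD; nra.
Qed.

Theorem theorem5p2 (R : rcfType) (delta : R) :
  0 < delta ->
  exists p : nat -> R,
    (exists (c1 c2 : R) (N : nat), 0 < c1 /\ 0 < c2 /\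
       forall n : nat, (N <= n)%N ->
         c1 / Num.sqrt (n%:R) <= p n <= c2 / Num.sqrt (n%:R)) /\
    (forall n : nat, 0 <= p n <= 1 /\
       forall mu : 'F_2, 1 - delta <= correct_prob (p n) n mu).
Proof.
move=> delta_gt0; pose m := Num.min delta 1.
have m_gt0 : 0 < m by rewrite lt_min delta_gt0 ltr01.
have m_le1 : m <= 1 by rewrite ge_min lexx orbT.
have m_le_delta : m <= delta by rewrite ge_min lexx.
exists (fun n => Num.sqrt m / Num.sqrt n%:R); split.
  exists (Num.sqrt m), (Num.sqrt m), 0%N.
  have sqrt_m_gt0 : 0 < Num.sqrt m by rewrite sqrtr_gt0.
  by do 2 split=> //; move=> n _; rewrite lexx.
move=> n; set p := _ / _.
have p_ge0 : 0 <= p by rewrite divr_ge0 ?sqrtr_ge0.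
have p2E : p ^+ 2 = m / n%:R by rewrite expr_div_n !sqr_sqrtr ?ler0n ?ltW.
have [p2_le1 np2_le_m] : p ^+ 2 <= 1 /\ n%:R * p ^+ 2 <= m.
  rewrite p2E; case: n {p p_ge0 p2E} => [|n].
    by rewrite invr0 mulr0 mul0r ler01 ltW.
  rewrite mulrCA divff ?mulr1 ?pnatr_eq0 // ler_pdivrMr ?ltr0Sn // mul1r.
  by split=> //; apply: le_trans m_le1 _; rewrite ler1n.
have p_le1 : p <= 1 by rewrite -(expr_le1 (isT : 0 < 2)%N p_ge0).
have p01 : 0 <= p <= 1 by rewrite p_ge0 p_le1.
split=> // mu; apply: le_trans (correct_prob_ge _ _ _ mu p01).
apply: le_trans (bernoulli_ineq _ _ n p2_le1); lra.
Qed.
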